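(* Let $X$ be an admissible complete CAT(1) space, $f\colon X\to(-\infty,\infty]$ a proper lower semicontinuous convex function, and $R_f$ the resolvent of $f$. Then $\mathrm{Argmin}_X f$ is nonempty if and only if there exists $x\in X$ such that $\{R_f^nx\}$ is spherically bounded and $\sup_n d(R_f^nx,R_f^{n-1}x)<\pi/2$. In this case, $\{R_f^nx\}$ is $\Delta$-convergent to an element of $\mathrm{Argmin}_X f$ for each $x\in X$.
   Context: A CAT(1) space is a $\pi$-geodesic metric space in which every geodesic triangle of perimeter $<2\pi$ satisfies the CAT(1) comparison inequality relative to comparison triangles in $\mathbb S^2$; it is admissible if $d(v,v')<\pi/2$ for all $v,v'$ (hence uniquely geodesic). $f$ is proper if it takes a real value somewhere, convex if $f(\alpha x\oplus(1-\alpha)y)\le\alpha f(x)+(1-\alpha)f(y)$ for $x,y\in X$, $\alpha\in(0,1)$, where $\alpha x\oplus(1-\alpha)y$ is the point on the geodesic from $x$ to $y$ at distance $(1-\alpha)d(x,y)$ from $x$. The resolvent is $R_fx=\mathrm{Argmin}_{y\in X}\{f(y)+\tan d(y,x)\sin d(y,x)\}$, which is a well-defined single point for each $x$ (known fact). A sequence is spherically bounded if $\inf_{y}\limsup_n d(x_n,y)<\pi/2$. $\{x_n\}$ is $\Delta$-convergent to $p$ if for every subsequence $\{x_{n_i}\}$, $p$ is the unique minimizer of $z\mapsto\limsup_i d(x_{n_i},z)$. *)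

From Stdlib Require Import Reals Lra.
Open Scope R_scope.

Inductive ER := Fin (r : R) | PInf.

Definition Er_le (a b : ER) : Prop :=
  match a, b with
  | _, PInf => True
  | PInf, Fin _ => False
  | Fin x, Fin y => x <= y
  end.

Definition Er_lt (a b : ER) : Prop :=
  match a, b with
  | Fin x, PInf => True
  | PInf, _ => False
  | Fin x, Fin y => x < y
  end.

Definition Er_addr (a : ER) (r : R) : ER :=
  match a with Fin x => Fin (x + r) | PInf => PInf end.

Section Metric.
Context {X : Type} (d : X -> X -> R).

Definition is_metric : Prop :=
  (forall x y, 0 <= d x y) /\ (forall x y, d x y = 0 <-> x = y) /\
  (forall x y, d x y = d y x) /\ (forall x y z, d x z <= d x y + d y z).

Definition complete : Prop :=
  forall u : nat -> X,
    (forall eps, eps > 0 -> exists N, forall m n, (N <= m)%nat -> (N <= n)%nat ->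
        d (u m) (u n) < eps) ->
    exists l, forall eps, eps > 0 -> exists N, forall n, (N <= n)%nat -> d (u n) l < eps.

Definition geodesic (x y : X) (c : R -> X) : Prop :=
  c 0 = x /\ c (d x y) = y /\
  forall s t, 0 <= s <= d x y -> 0 <= t <= d x y -> d (c s) (c t) = Rabs (s - t).

Definition pi_geodesic : Prop :=
  forall x y, d x y < PI -> exists c, geodesic x y c.

Definition V3 := (R * R * R)%type.
Definition dot (u v : V3) : R :=
  let '(a1, a2, a3) := u in let '(b1, b2, b3) := v in a1*b1 + a2*b2 + a3*b3.
Definition on_S2 (u : V3) : Prop := dot u u = 1.
Definition dS2 (u v : V3) : R := acos (dot u v).
Definition lin2 (a : R) (u : V3) (b : R) (v : V3) : V3 :=
  let '(a1, a2, a3) := u in let '(b1, b2, b3) := v in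
  (a*a1 + b*b1, a*a2 + b*b2, a*a3 + b*b3).
(* point at distance t from u on the minimal arc from u to v, where l = dS2 u v *)
Definition sph_pt (u v : V3) (l t : R) : V3 :=
  if Req_EM_T (sin l) 0 then u else lin2 (sin (l - t) / sin l) u (sin t / sin l) v.

Definition side_pt (a b : X) (c : R -> X) (ab bb : V3) (p : X) (pb : V3) : Prop :=
  exists t, 0 <= t <= d a b /\ p = c t /\ pb = sph_pt ab bb (d a b) t.

Definition CAT1_ineq : Prop :=
  forall (x y z : X) (cxy cyz czx : R -> X),
    geodesic x y cxy -> geodesic y z cyz -> geodesic z x czx ->
    d x y + d y z + d z x < 2 * PI ->
    forall xb yb zb : V3, on_S2 xb -> on_S2 yb -> on_S2 zb ->
      dS2 xb yb = d x y -> dS2 yb zb = d y z -> dS2 zb xb = d z x ->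
      let tri p pb :=
        side_pt x y cxy xb yb p pb \/ side_pt y z cyz yb zb p pb \/
        side_pt z x czx zb xb p pb in
      forall p pb q qb, tri p pb -> tri q qb -> d p q <= dS2 pb qb.

Definition CAT1_space : Prop := is_metric /\ pi_geodesic /\ CAT1_ineq.

Definition admissible : Prop := forall v v', d v v' < PI / 2.

Definition proper (f : X -> ER) : Prop := exists x r, f x = Fin r.

Definition lsc (f : X -> ER) : Prop :=
  forall x r, Er_lt (Fin r) (f x) ->
    exists delta, delta > 0 /\ forall y, d x y < delta -> Er_lt (Fin r) (f y).

(* alpha x (+) (1-alpha) y = c ((1-alpha) d(x,y)) for a geodesic c from x to y *)
Definition convex (f : X -> ER) : Prop :=
  forall x y a c, 0 < a < 1 -> geodesic x y c ->
    match f x, f y with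
    | Fin u, Fin v => Er_le (f (c ((1 - a) * d x y))) (Fin (a * u + (1 - a) * v))
    | _, _ => True
    end.

Definition is_argmin (f : X -> ER) (p : X) : Prop := forall y, Er_le (f p) (f y).

Definition is_resolvent (f : X -> ER) (Rf : X -> X) : Prop :=
  forall x, is_argmin (fun y => Er_addr (f y) (tan (d y x) * sin (d y x))) (Rf x).

Definition is_limsup (u : nat -> R) (L : R) : Prop :=
  (forall eps, eps > 0 -> exists N, forall n, (N <= n)%nat -> u n <= L + eps) /\
  (forall eps N, eps > 0 -> exists n, (N <= n)%nat /\ L - eps <= u n).

(* limsup_n u n < c  (limsup possibly +oo) *)
Definition limsup_lt (u : nat -> R) (c : R) : Prop :=
  exists c' N, c' < c /\ forall n, (N <= n)%nat -> u n <= c'.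

(* inf_y limsup_n d(x_n, y) < pi/2 *)
Definition spherically_bounded (x : nat -> X) : Prop :=
  exists y, limsup_lt (fun n => d (x n) y) (PI / 2).

Definition sup_lt (u : nat -> R) (c : R) : Prop :=
  exists c', c' < c /\ forall n, u n <= c'.

Definition Delta_conv (x : nat -> X) (p : X) : Prop :=
  forall phi : nat -> nat, (forall i, (phi i < phi (S i))%nat) ->
    exists Lp, is_limsup (fun i => d (x (phi i)) p) Lp /\
      forall z Lz, z <> p -> is_limsup (fun i => d (x (phi i)) z) Lz -> Lp < Lz.

End Metric.

Definition iter {X : Type} (n : nat) (g : X -> X) (x : X) : X := Nat.iter n g x.

(* Convexity of [f] along a geodesic from [Rf x], the minimality of [Rf x],
   and the CAT(1) lower bound for [cos d(c t, x)] along that geodesic give,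
   after differentiating at [t = 0], the resolvent inequality. It shows that
   the fixed points of [Rf] are exactly the minimizers of [f] and that orbits
   are Fejer monotone, in cosine form, towards every minimizer.
   If an orbit is spherically bounded with steps bounded away from [PI / 2],
   completeness and the uniform convexity of balls of radius below [PI / 2]
   give it a unique asymptotic center [z]; the resolvent inequality for the
   pair [(x_k, z)] shows that [Rf z] has asymptotic radius at most that of [z],
   so [z] is fixed, hence a minimizer. Conversely the orbit of a minimizer is
   constant. For Delta-convergence, Fejer monotonicity makes the asymptotic
   radius at a minimizer the same for the orbit and all its subsequences, and
   the same argument makes every subsequence's asymptotic center a minimizer,
   so all these centers coincide. *)

From Stdlib Require Import Reals Lra Lia Psatz Classical ClassicalEpsilon.
From Coquelicot Require Import Coquelicot.
Open Scope R_scope.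

Lemma cos_decr_le a b : 0 <= a -> a <= b -> b <= PI -> cos b <= cos a.
Proof.
  intros Ha Hab Hb. destruct (Req_dec a b) as [->|Hne]; [lra|].
  left. apply cos_decreasing_1; lra.
Qed.

Lemma cos_le_inv a b : 0 <= a <= PI -> 0 <= b <= PI -> cos a <= cos b -> b <= a.
Proof.
  intros Ha Hb H. apply Rnot_lt_le. intros h.
  pose proof (cos_decreasing_1 a b ltac:(lra) ltac:(lra) ltac:(lra) ltac:(lra) h). lra.
Qed.

Lemma cos_lt_inv a b : 0 <= a <= PI -> 0 <= b <= PI -> cos a < cos b -> b < a.
Proof. intros; apply cos_decreasing_0; lra. Qed.

Lemma cos_lt_1 a : 0 < a <= PI -> cos a < 1.
Proof. intros. rewrite <- cos_0. apply cos_decreasing_1; lra. Qed.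

Lemma Rabs_cos_sub_le a b : Rabs (cos a - cos b) <= Rabs (a - b).
Proof.
  destruct (MVT_abs cos (fun x => - sin x) b a) as [c [Hc _]].
  { intros; apply derivable_pt_lim_cos. }
  rewrite Hc, Rabs_Ropp. pose proof (SIN_bound c).
  assert (Rabs (sin c) <= 1) by (apply Rabs_le; lra).
  pose proof (Rabs_pos (a - b)). nra.
Qed.

Lemma cos_le_add_dist a b : cos a <= cos b + Rabs (a - b).
Proof. pose proof (Rabs_cos_sub_le a b). pose proof (Rle_abs (cos a - cos b)). lra. Qed.

Lemma cos_ge_of_le_add r e s :
  0 <= e -> 0 <= s -> r + e <= PI -> s <= r + e -> cos r - e <= cos s.
Proof.
  intros He Hs Hre Hsre.
  pose proof (cos_le_add_dist r (r + e)).
  replace (r - (r + e)) with (- e) in H by ring.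
  rewrite Rabs_Ropp, Rabs_pos_eq in H by lra.
  pose proof (cos_decr_le s (r + e) Hs Hsre Hre). lra.
Qed.

Lemma cos_le_of_ge_sub r e s :
  0 <= r -> 0 <= e -> 0 <= s <= PI -> r - e <= s -> cos s <= cos r + e.
Proof.
  intros Hr He Hs Hres.
  assert (cos s <= cos (Rmax 0 (r - e))).
  { apply cos_decr_le; [apply Rmax_l| |lra]. apply Rmax_lub; lra. }
  pose proof (cos_le_add_dist (Rmax 0 (r - e)) r).
  assert (Rabs (Rmax 0 (r - e) - r) <= e).
  { apply Rabs_le. unfold Rmax; destruct (Rle_dec 0 (r - e)); lra. }
  lra.
Qed.

Lemma tan_mul_sin s : 0 < cos s -> tan s * sin s = / cos s - cos s.
Proof.
  intros h. unfold tan. pose proof (sin2_cos2 s). unfold Rsqr in *.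
  replace (sin s / cos s * sin s) with ((sin s * sin s) / cos s) by (field; lra).
  replace (sin s * sin s) with (1 - cos s * cos s) by lra. field. lra.
Qed.

Lemma derivable_pt_lim_ge_slope (F : R -> R) D A l :
  derivable_pt_lim F 0 D -> 0 < l -> (forall t, 0 < t < l -> A * t <= F t - F 0) -> A <= D.
Proof.
  intros HD Hl Hb. apply Rnot_lt_le. intros h.
  destruct (HD (A - D) ltac:(lra)) as [del Hdel].
  set (t := Rmin (del / 2) (l / 2)).
  pose proof (cond_pos del).
  assert (Ht0 : 0 < t) by (unfold t; apply Rmin_glb_lt; lra).
  assert (Ht1 : t < l) by (unfold t; pose proof (Rmin_r (del/2) (l/2)); lra).
  assert (Ht2 : t < del) by (unfold t; pose proof (Rmin_l (del/2) (l/2)); lra).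
  specialize (Hdel t ltac:(lra) ltac:(rewrite Rabs_pos_eq; lra)).
  rewrite Rplus_0_l in Hdel. specialize (Hb t ltac:(lra)).
  apply Rabs_lt_between in Hdel.
  assert (A <= (F t - F 0) / t).
  { apply (Rmult_le_reg_r t); auto. unfold Rdiv. rewrite Rmult_assoc, Rinv_l by lra. lra. }
  lra.
Qed.

Lemma dot_Cauchy_Schwarz (p z : V3) : (dot p z) ^ 2 <= dot p p * dot z z.
Proof.
  destruct p as [[a1 a2] a3]; destruct z as [[b1 b2] b3]; simpl.
  assert (E : (a1*b1+a2*b2+a3*b3)^2 + ((a1*b2-a2*b1)^2 + (a1*b3-a3*b1)^2 + (a2*b3-a3*b2)^2)
     = (a1*a1+a2*a2+a3*a3)*(b1*b1+b2*b2+b3*b3)) by ring.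
  pose proof (pow2_ge_0 (a1*b2-a2*b1)); pose proof (pow2_ge_0 (a1*b3-a3*b1)).
  pose proof (pow2_ge_0 (a2*b3-a3*b2)). lra.
Qed.

Lemma dS2_of_dot u v s : 0 <= s <= PI -> dot u v = cos s -> dS2 u v = s.
Proof. intros Hs E. unfold dS2. rewrite E. apply acos_cos; lra. Qed.

Lemma dot_le_cos_of_le_dS2 p q s :
  on_S2 p -> on_S2 q -> 0 <= s -> s <= dS2 p q -> dot p q <= cos s.
Proof.
  intros Hp Hq Hs Hle. pose proof (dot_Cauchy_Schwarz p q) as CS.
  unfold on_S2 in Hp, Hq. rewrite Hp, Hq in CS.
  assert (Hv : -1 <= dot p q <= 1) by nra.
  rewrite <- (cos_acos _ Hv). apply cos_decr_le; [exact Hs|exact Hle|apply acos_bound].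
Qed.

Lemma sph_pt_0 u v l : sph_pt u v l 0 = u.
Proof.
  unfold sph_pt. destruct (Req_EM_T (sin l) 0); auto.
  destruct u as [[u1 u2] u3]; destruct v as [[v1 v2] v3]. unfold lin2.
  rewrite Rminus_0_r, sin_0. unfold Rdiv. rewrite Rinv_r by auto.
  f_equal; [f_equal|]; ring.
Qed.

Lemma sph_pt_planar l t :
  sin l <> 0 -> sph_pt (1, 0, 0) (cos l, sin l, 0) l t = (cos t, sin t, 0).
Proof.
  intros Hl. unfold sph_pt. destruct (Req_EM_T (sin l) 0) as [|_]; [contradiction|].
  unfold lin2. rewrite sin_minus.
  f_equal; [f_equal|]; field_simplify; auto; field; auto.
Qed.

(* The third vertex of a comparison triangle with vertices [(1,0,0)] and
   [(cos l, sin l, 0)] is [(cos b, u, w)] for suitable [u], [w]. *)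
Lemma S2_third_vertex l a b :
  0 < l < PI / 2 -> 0 <= b < PI / 2 -> cos (l + b) <= cos a <= cos (l - b) ->
  exists u w, cos b ^ 2 + u ^ 2 + w ^ 2 = 1 /\ cos l * cos b + sin l * u = cos a.
Proof.
  intros Hl Hb [C1 C2]. pose proof PI_RGT_0.
  assert (sl : 0 < sin l) by (apply sin_gt_0; lra).
  assert (sb : 0 <= sin b) by (apply sin_ge_0; lra).
  rewrite cos_plus in C1. rewrite cos_minus in C2.
  set (u := (cos a - cos l * cos b) / sin l).
  assert (Hu : u * sin l = cos a - cos l * cos b) by (unfold u; field; lra).
  assert (Hsb : sin b ^ 2 + cos b ^ 2 = 1) by (rewrite <- (sin2_cos2 b); unfold Rsqr; ring).
  assert (Hu2 : u ^ 2 <= sin b ^ 2).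
  { assert (Hus : (u * sin l) ^ 2 <= (sin l * sin b) ^ 2).
    { rewrite Hu. assert (0 <= sin l * sin b) by nra. nra. }
    apply Rnot_lt_le. intros h.
    assert (sin b ^ 2 * sin l ^ 2 < u ^ 2 * sin l ^ 2) by (apply Rmult_lt_compat_r; nra).
    nra. }
  exists u, (sqrt (1 - cos b ^ 2 - u ^ 2)). split.
  - rewrite pow2_sqrt by lra. lra.
  - lra.
Qed.

(* By [cat1_cos_geodesic], [cos_profile (cos d(c 0, x)) (cos d(c l, x)) l t]
   bounds [cos d(c t, x)] from below along a geodesic [c] of length [l]. *)
Definition cos_profile (C E l t : R) : R := (C * sin (l - t) + E * sin t) / sin l.

Lemma inv_sub_cos_profile_derive C E l :
  0 < C -> 0 < sin l ->
  is_derive (fun t => / cos_profile C E l t - cos_profile C E l t) 0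
    ((- / C ^ 2 - 1) * ((E - C * cos l) / sin l)).
Proof.
  intros HC Hl. unfold cos_profile. auto_derive.
  - replace (l + - 0) with l by ring. rewrite sin_0.
    replace ((C * sin l + E * 0) * / sin l) with C by (field; lra). lra.
  - replace (l + - 0) with l by ring. rewrite sin_0, cos_0.
    replace ((C * sin l + E * 0) * / sin l) with C by (field; lra).
    field. split; lra.
Qed.

Lemma argmin_finite {X : Type} (f : X -> ER) p :
  proper f -> is_argmin f p -> exists fp, f p = Fin fp.
Proof.
  intros [x0 [r Hr]] Hm. specialize (Hm x0). rewrite Hr in Hm.
  destruct (f p) as [fp|]; [eauto|contradiction].
Qed.

Definition limsup_real (u : nat -> R) : R := real (LimSup_seq u).

Lemma is_limsup_limsup_real (u : nat -> R) B :
  (forall n, 0 <= u n <= B) -> is_limsup u (limsup_real u) /\ 0 <= limsup_real u <= B.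
Proof.
  intros Hb. unfold limsup_real. destruct (ex_LimSup_seq u) as [l Hl].
  rewrite (is_LimSup_seq_unique u l Hl).
  destruct l as [l0| |]; simpl in Hl |- *.
  - split; [split|split].
    + intros eps Heps. destruct (Hl (mkposreal eps Heps)) as [_ [N HN]]. exists N.
      intros n Hn. specialize (HN n Hn). simpl in HN. lra.
    + intros eps N Heps. destruct (Hl (mkposreal eps Heps)) as [HN _].
      destruct (HN N) as [n [Hn1 Hn2]]. exists n. simpl in Hn2. split; auto; lra.
    + apply Rnot_lt_le. intros h.
      destruct (Hl (mkposreal (- l0 / 2) ltac:(lra))) as [_ [N HN]].
      specialize (HN N (le_n _)). simpl in HN. specialize (Hb N). lra.
    + apply Rnot_lt_le. intros h.
      destruct (Hl (mkposreal ((l0 - B) / 2) ltac:(lra))) as [HN _].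
      destruct (HN 0%nat) as [n [_ Hn]]. simpl in Hn. specialize (Hb n). lra.
  - exfalso. destruct (Hl B 0%nat) as [n [_ Hn]]. specialize (Hb n). lra.
  - exfalso. destruct (Hl 0) as [N HN]. specialize (HN N (le_n _)). specialize (Hb N). lra.
Qed.

Lemma is_limsup_unique u L1 L2 : is_limsup u L1 -> is_limsup u L2 -> L1 = L2.
Proof.
  intros [A1 B1] [A2 B2].
  destruct (Rtotal_order L1 L2) as [h|[h|h]]; auto; exfalso.
  - destruct (A1 ((L2 - L1) / 3) ltac:(lra)) as [N HN].
    destruct (B2 ((L2 - L1) / 3) N ltac:(lra)) as [n [Hn1 Hn2]]. specialize (HN n Hn1). lra.
  - destruct (A2 ((L1 - L2) / 3) ltac:(lra)) as [N HN].
    destruct (B1 ((L1 - L2) / 3) N ltac:(lra)) as [n [Hn1 Hn2]]. specialize (HN n Hn1). lra.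
Qed.

Lemma is_limsup_le u v Lu Lv c N0 :
  (forall n, (N0 <= n)%nat -> u n <= v n + c) ->
  is_limsup u Lu -> is_limsup v Lv -> Lu <= Lv + c.
Proof.
  intros Huv [Au Bu] [Av Bv]. apply Rnot_lt_le. intros h.
  set (e := (Lu - Lv - c) / 3).
  destruct (Av e ltac:(unfold e; lra)) as [N HN].
  destruct (Bu e (max N N0) ltac:(unfold e; lra)) as [n [Hn1 Hn2]].
  specialize (HN n ltac:(lia)). specialize (Huv n ltac:(lia)). unfold e in *. lra.
Qed.

Lemma is_limsup_le_const u L c N :
  (forall n, (N <= n)%nat -> u n <= c) -> is_limsup u L -> L <= c.
Proof.
  intros Hb [_ B]. apply Rnot_lt_le. intros h.
  destruct (B ((L - c) / 2) N ltac:(lra)) as [n [Hn1 Hn2]]. specialize (Hb n Hn1). lra.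
Qed.

Lemma is_limsup_common_index (u1 u2 u3 : nat -> R) L1 L2 L3 e :
  is_limsup u1 L1 -> is_limsup u2 L2 -> is_limsup u3 L3 -> e > 0 ->
  exists i, u1 i <= L1 + e /\ u2 i <= L2 + e /\ L3 - e <= u3 i.
Proof.
  intros [A1 _] [A2 _] [_ B3] He.
  destruct (A1 e He) as [N1 H1]. destruct (A2 e He) as [N2 H2].
  destruct (B3 e (max N1 N2) He) as [n [Hn1 Hn2]].
  exists n. split; [apply H1; lia|split; [apply H2; lia|auto]].
Qed.

Lemma nonincr_le (u : nat -> R) :
  (forall n, u (S n) <= u n) -> forall n m, (n <= m)%nat -> u m <= u n.
Proof. intros Hu n m Hnm. induction Hnm; [lra|]. specialize (Hu m). lra. Qed.

Lemma is_limsup_nonincr_le (u : nat -> R) L :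
  (forall n, u (S n) <= u n) -> is_limsup u L -> forall n, L <= u n.
Proof.
  intros Hu [_ B] n. apply Rnot_lt_le. intros h.
  destruct (B ((L - u n) / 2) n ltac:(lra)) as [m [Hm1 Hm2]].
  pose proof (nonincr_le u Hu n m Hm1). lra.
Qed.

Lemma strict_mono_ge_id (phi : nat -> nat) :
  (forall i, (phi i < phi (S i))%nat) -> forall i, (i <= phi i)%nat.
Proof. intros Hphi. induction i; [lia|]. specialize (Hphi i). lia. Qed.

Lemma is_limsup_subseq_nonincr (u : nat -> R) phi L :
  (forall i, (phi i < phi (S i))%nat) -> (forall n, u (S n) <= u n) ->
  is_limsup u L -> is_limsup (fun i => u (phi i)) L.
Proof.
  intros Hphi Hu HL. pose proof (strict_mono_ge_id phi Hphi) as Hge.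
  pose proof (is_limsup_nonincr_le u L Hu HL) as Hlow. destruct HL as [A _]. split.
  - intros e He. destruct (A e He) as [N HN]. exists N. intros n Hn.
    apply HN. specialize (Hge n). lia.
  - intros e N He. exists N. split; [lia|]. specialize (Hlow (phi N)). lra.
Qed.

Lemma INR_S_inv_lt e : 0 < e -> exists N, forall m, (N <= m)%nat -> / INR (S m) < e.
Proof.
  intros He. destruct (archimed_cor1 e He) as [N [HN HN0]]. exists N. intros m Hm.
  apply Rle_lt_trans with (/ INR N); auto.
  apply Rinv_le_contravar; [apply lt_0_INR; lia|apply le_INR; lia].
Qed.

Lemma le_of_cos_le_approx L r A :
  0 <= L <= PI -> 0 <= r <= PI -> 0 < A ->
  (forall e, 0 < e <= 1 -> cos r <= cos L + A * e) -> L <= r.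
Proof.
  intros HL Hr HA Happ. apply cos_le_inv; auto.
  apply Rnot_lt_le. intros h.
  set (e := Rmin 1 ((cos r - cos L) / (2 * A))).
  assert (He : 0 < e) by (unfold e; apply Rmin_glb_lt; [lra|]; apply Rdiv_lt_0_compat; lra).
  pose proof (Rmin_l 1 ((cos r - cos L) / (2 * A))) as He1.
  pose proof (Rmin_r 1 ((cos r - cos L) / (2 * A))) as He2. fold e in He1, He2.
  specialize (Happ e ltac:(lra)).
  apply (Rmult_le_compat_l A) in He2; [|lra].
  replace (A * ((cos r - cos L) / (2 * A))) with ((cos r - cos L) / 2) in He2 by (field; lra).
  lra.
Qed.

Section AdmissibleCAT1.

Variables (X : Type) (d : X -> X -> R).
Hypotheses (Hmetric : is_metric d) (Hgeodesic : pi_geodesic d) (Hcomplete : complete d)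
  (Hcat : CAT1_ineq d) (Hadm : admissible d).

Lemma dist_ge0 x y : 0 <= d x y.
Proof. apply Hmetric. Qed.

Lemma dist_sym x y : d x y = d y x.
Proof. apply Hmetric. Qed.

Lemma dist_triangle x y z : d x z <= d x y + d y z.
Proof. apply Hmetric. Qed.

Lemma dist_eq0 x y : d x y = 0 -> x = y.
Proof. apply Hmetric. Qed.

Lemma dist_xx x : d x x = 0.
Proof. apply Hmetric; reflexivity. Qed.

Lemma dist_lt_PI2 x y : d x y < PI / 2.
Proof. apply Hadm. Qed.

Lemma dist_range x y : 0 <= d x y <= PI.
Proof. pose proof (dist_ge0 x y); pose proof (dist_lt_PI2 x y); pose proof PI_RGT_0; lra. Qed.

Lemma geodesic_exists x y : exists c, geodesic d x y c.
Proof. apply Hgeodesic. pose proof (dist_lt_PI2 x y); pose proof PI_RGT_0; lra. Qed.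

Lemma cos_dist_gt0 x y : 0 < cos (d x y).
Proof. pose proof (dist_lt_PI2 x y); pose proof (dist_ge0 x y); apply cos_gt_0; lra. Qed.

Lemma sin_dist_gt0 x y : 0 < d x y -> 0 < sin (d x y).
Proof. intros. pose proof (dist_lt_PI2 x y); pose proof PI_RGT_0; apply sin_gt_0; lra. Qed.

Lemma dist_pos_or_eq x y : x = y \/ 0 < d x y.
Proof.
  destruct (Req_dec (d x y) 0) as [h|h]; [left; apply dist_eq0; exact h|].
  right. pose proof (dist_ge0 x y). lra.
Qed.

Lemma cos_dist_le_inv x y x' y' : cos (d x y) <= cos (d x' y') -> d x' y' <= d x y.
Proof. apply cos_le_inv; apply dist_range. Qed.

Lemma cos_dist_triangle x y z :
  cos (d x y + d z x) <= cos (d y z) <= cos (d x y - d z x).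
Proof.
  pose proof PI_RGT_0.
  pose proof (dist_triangle y x z) as T1. pose proof (dist_triangle x z y) as T2.
  pose proof (dist_triangle z y x) as T3.
  rewrite (dist_sym y x) in T1, T3. rewrite (dist_sym x z) in T1, T2.
  rewrite (dist_sym z y) in T2, T3.
  pose proof (dist_range x y). pose proof (dist_range y z). pose proof (dist_range z x).
  pose proof (dist_lt_PI2 x y). pose proof (dist_lt_PI2 z x).
  split; [apply cos_decr_le; lra|].
  destruct (Rle_lt_dec (d z x) (d x y)).
  - apply cos_decr_le; lra.
  - replace (d x y - d z x) with (- (d z x - d x y)) by ring. rewrite cos_neg.
    apply cos_decr_le; lra.
Qed.

(* The CAT(1) comparison between [c t] and [z], computed in the comparison
   triangle with vertices [(1,0,0)], [(cos l, sin l, 0)] and [(cos b, u, w)]. *)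
Lemma cat1_cos_geodesic x y z c t :
  geodesic d x y c -> 0 < d x y -> 0 <= t <= d x y ->
  cos (d x z) * sin (d x y - t) + cos (d y z) * sin t <= cos (d (c t) z) * sin (d x y).
Proof.
  intros Hc Hl Ht. pose proof PI_RGT_0.
  destruct (geodesic_exists y z) as [cyz Hyz]. destruct (geodesic_exists z x) as [czx Hzx].
  rewrite (dist_sym x z).
  set (l := d x y) in *. set (a := d y z). set (b := d z x).
  assert (Hl2 : l < PI / 2) by apply dist_lt_PI2.
  assert (Ha : 0 <= a < PI / 2) by (split; [apply dist_ge0|apply dist_lt_PI2]).
  assert (Hb : 0 <= b < PI / 2) by (split; [apply dist_ge0|apply dist_lt_PI2]).
  assert (sl : 0 < sin l) by (apply sin_gt_0; lra).
  assert (Hcos : cos (l + b) <= cos a <= cos (l - b)) by apply cos_dist_triangle.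
  destruct (S2_third_vertex l a b ltac:(lra) Hb Hcos) as [u [w [Hzb Hua]]].
  set (xb := (1, 0, 0) : V3). set (yb := (cos l, sin l, 0) : V3).
  set (zb := (cos b, u, w) : V3).
  assert (Hsc : forall s, sin s ^ 2 + cos s ^ 2 = 1)
    by (intros s; rewrite <- (sin2_cos2 s); unfold Rsqr; ring).
  assert (on_x : on_S2 xb) by (unfold on_S2, xb; simpl; ring).
  assert (on_y : on_S2 yb) by (unfold on_S2, yb; simpl; pose proof (Hsc l); nra).
  assert (on_z : on_S2 zb) by (unfold on_S2, zb; simpl; nra).
  assert (exy : dS2 xb yb = l) by (apply dS2_of_dot; [lra|unfold xb, yb; simpl; ring]).
  assert (eyz : dS2 yb zb = a) by (apply dS2_of_dot; [lra|unfold yb, zb; simpl; lra]).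
  assert (ezx : dS2 zb xb = b) by (apply dS2_of_dot; [lra|unfold zb, xb; simpl; ring]).
  assert (Hper : d x y + d y z + d z x < 2 * PI) by (fold l a b; lra).
  assert (Hcmp : d (c t) z <= dS2 (sph_pt xb yb l t) zb).
  { apply (Hcat x y z c cyz czx Hc Hyz Hzx Hper xb yb zb on_x on_y on_z exy eyz ezx).
    - left. exists t. split; [exact Ht|split; reflexivity].
    - right; right. exists 0. split; [fold b; lra|]. split.
      + symmetry; apply Hzx.
      + symmetry; apply sph_pt_0. }
  unfold xb, yb in Hcmp. rewrite sph_pt_planar in Hcmp by lra.
  assert (on_t : on_S2 (cos t, sin t, 0)) by (unfold on_S2; simpl; pose proof (Hsc t); nra).
  pose proof (dot_le_cos_of_le_dS2 _ _ _ on_t on_z (dist_ge0 _ _) Hcmp) as Hcv.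
  unfold zb in Hcv; simpl in Hcv.
  rewrite sin_minus, <- Hua. nra.
Qed.

Lemma cat1_cos_midpoint x y z c :
  geodesic d x y c -> 0 < d x y ->
  cos (d x z) + cos (d y z) <= 2 * cos (d (c (d x y / 2)) z) * cos (d x y / 2).
Proof.
  intros Hc Hl. pose proof (dist_lt_PI2 x y).
  pose proof (cat1_cos_geodesic x y z c (d x y / 2) Hc Hl ltac:(lra)) as K.
  replace (d x y - d x y / 2) with (d x y / 2) in K by field.
  replace (sin (d x y)) with (2 * sin (d x y / 2) * cos (d x y / 2)) in K
    by (rewrite <- sin_2a; f_equal; field).
  assert (0 < sin (d x y / 2)) by (apply sin_gt_0; pose proof PI_RGT_0; lra).
  nra.
Qed.


(* Uniform convexity of CAT(1) balls of radius below [PI / 2]. *)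
Lemma cat1_midpoint_gap w z c s r e :
  geodesic d w z c -> 0 < d w z -> 0 <= r -> 0 <= e -> r + e <= PI ->
  d s w <= r + e -> d s z <= r + e -> r - e <= d s (c (d w z / 2)) ->
  cos r * (1 - cos (d w z / 2)) <= 2 * e.
Proof.
  intros Hc Hd Hr He Hre H1 H2 H3. pose proof PI_RGT_0.
  pose proof (cat1_cos_midpoint w z s c Hc Hd) as M.
  rewrite (dist_sym w s), (dist_sym z s), (dist_sym (c _) s) in M.
  pose proof (cos_ge_of_le_add r e (d s w) He (dist_ge0 s w) Hre H1).
  pose proof (cos_ge_of_le_add r e (d s z) He (dist_ge0 s z) Hre H2).
  pose proof (cos_le_of_ge_sub r e _ Hr He (dist_range s (c (d w z / 2))) H3).
  pose proof (dist_lt_PI2 w z).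
  assert (0 <= cos (d w z / 2)) by (apply cos_ge_0; lra).
  pose proof (COS_bound (d w z / 2)).
  nra.
Qed.

Definition asym_radius (s : nat -> X) (w : X) : R := limsup_real (fun i => d (s i) w).

Lemma asym_radius_spec s w :
  is_limsup (fun i => d (s i) w) (asym_radius s w) /\ 0 <= asym_radius s w <= PI / 2.
Proof.
  apply is_limsup_limsup_real. intros n. split; [apply dist_ge0|left; apply dist_lt_PI2].
Qed.

Lemma asym_radius_le_dist s w w' : asym_radius s w <= asym_radius s w' + d w' w.
Proof.
  apply (is_limsup_le (fun i => d (s i) w) (fun i => d (s i) w') _ _ _ 0%nat);
    try apply asym_radius_spec.
  intros n _. apply dist_triangle.
Qed.

Lemma asym_radius_inf s :
  exists r, 0 <= r /\ (forall w, r <= asym_radius s w) /\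
            (forall e, e > 0 -> exists w, asym_radius s w < r + e).
Proof.
  set (E := fun t => exists w, t = - asym_radius s w).
  assert (Hlow : forall w, 0 <= asym_radius s w) by (intros w; apply asym_radius_spec).
  destruct (completeness E) as [m [Hub Hlub]].
  - exists 0. intros t [w ->]. specialize (Hlow w). lra.
  - exists (- asym_radius s (s 0%nat)). eexists; reflexivity.
  - exists (- m). split; [|split].
    + assert (m <= 0); [|lra]. apply Hlub. intros t [w ->]. specialize (Hlow w). lra.
    + intros w. assert (- asym_radius s w <= m) by (apply Hub; exists w; auto). lra.
    + intros e He. apply NNPP. intros Hn.
      assert (m <= m - e); [|lra]. apply Hlub. intros t [w ->].
      destruct (Rlt_le_dec (asym_radius s w) (- m + e)) as [h|h]; [exfalso; eauto|lra].
Qed.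

Lemma asym_center_unique s r w z :
  0 <= r < PI / 2 -> (forall v, r <= asym_radius s v) ->
  asym_radius s w <= r -> asym_radius s z <= r -> w = z.
Proof.
  intros Hr Hrl Hw Hz. destruct (dist_pos_or_eq w z) as [|Hd]; [assumption|exfalso].
  destruct (geodesic_exists w z) as [c Hc].
  set (m := c (d w z / 2)).
  pose proof PI2_3_2. pose proof (dist_lt_PI2 w z).
  assert (cr : 0 < cos r) by (apply cos_gt_0; lra).
  assert (cd : cos (d w z / 2) < 1) by (apply cos_lt_1; lra).
  set (q := cos r * (1 - cos (d w z / 2))).
  assert (Hq : 0 < q) by (unfold q; apply Rmult_lt_0_compat; lra).
  set (e := Rmin (q / 4) (1 / 2)).
  assert (He : 0 < e) by (unfold e; apply Rmin_glb_lt; lra).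
  pose proof (Rmin_l (q / 4) (1 / 2)). pose proof (Rmin_r (q / 4) (1 / 2)). fold e in H1, H2.
  destruct (is_limsup_common_index _ _ _ _ _ _ e (proj1 (asym_radius_spec s w))
    (proj1 (asym_radius_spec s z)) (proj1 (asym_radius_spec s m)) He) as [i [G1 [G2 G3]]].
  pose proof (Hrl m).
  pose proof (cat1_midpoint_gap w z c (s i) r e Hc Hd ltac:(lra) ltac:(lra) ltac:(lra)
    ltac:(lra) ltac:(lra) ltac:(fold m; lra)).
  fold q in H4. lra.
Qed.

Lemma asym_minimizing_Cauchy s r (zs : nat -> X) :
  0 <= r < PI / 2 -> (forall v, r <= asym_radius s v) ->
  (forall k, asym_radius s (zs k) < r + / INR (S k)) ->
  forall eps, eps > 0 -> exists N, forall m n, (N <= m)%nat -> (N <= n)%nat ->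
    d (zs m) (zs n) < eps.
Proof.
  intros Hr Hrl Hzs eps Heps. pose proof PI2_3_2.
  destruct (Rlt_le_dec (PI / 2) eps) as [hb|hb].
  { exists 0%nat. intros. pose proof (dist_lt_PI2 (zs m) (zs n)). lra. }
  assert (cr : 0 < cos r) by (apply cos_gt_0; lra).
  assert (cd : cos (eps / 2) < 1) by (apply cos_lt_1; lra).
  set (q := cos r * (1 - cos (eps / 2))).
  assert (Hq : 0 < q) by (unfold q; apply Rmult_lt_0_compat; lra).
  set (e := Rmin (q / 8) (1 / 2)).
  assert (He : 0 < e) by (unfold e; apply Rmin_glb_lt; lra).
  pose proof (Rmin_l (q / 8) (1 / 2)). pose proof (Rmin_r (q / 8) (1 / 2)). fold e in H0, H1.
  destruct (INR_S_inv_lt e He) as [N HN]. exists N. intros m n Hm Hn.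
  pose proof (Hzs m). pose proof (Hzs n). pose proof (HN m Hm). pose proof (HN n Hn).
  destruct (dist_pos_or_eq (zs m) (zs n)) as [->|Hd]; [rewrite dist_xx; lra|].
  destruct (geodesic_exists (zs m) (zs n)) as [c Hc].
  set (mid := c (d (zs m) (zs n) / 2)).
  destruct (is_limsup_common_index _ _ _ _ _ _ e (proj1 (asym_radius_spec s (zs m)))
    (proj1 (asym_radius_spec s (zs n))) (proj1 (asym_radius_spec s mid)) He)
    as [i [G1 [G2 G3]]].
  pose proof (Hrl mid).
  pose proof (cat1_midpoint_gap (zs m) (zs n) c (s i) r (2 * e) Hc Hd ltac:(lra) ltac:(lra)
    ltac:(lra) ltac:(lra) ltac:(lra) ltac:(fold mid; lra)) as MK.
  pose proof (dist_range (zs m) (zs n)).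
  assert (cos (eps / 2) < cos (d (zs m) (zs n) / 2)) by (unfold q in H0; nra).
  assert (d (zs m) (zs n) / 2 < eps / 2) by (apply cos_lt_inv; lra).
  lra.
Qed.

Lemma asym_center_exists s w0 :
  asym_radius s w0 < PI / 2 ->
  exists z, forall w, w <> z -> asym_radius s z < asym_radius s w.
Proof.
  intros Hw0. destruct (asym_radius_inf s) as [r [Hr0 [Hrl Hre]]].
  assert (Hr2 : r < PI / 2) by (specialize (Hrl w0); lra).
  assert (Hz : forall k : nat, exists w, asym_radius s w < r + / INR (S k)).
  { intros k. apply Hre. apply Rinv_0_lt_compat, lt_0_INR; lia. }
  destruct (choice _ Hz) as [zs Hzs].
  destruct (Hcomplete zs (asym_minimizing_Cauchy s r zs ltac:(lra) Hrl Hzs)) as [z Hlim].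
  assert (Hzr : asym_radius s z <= r).
  { apply Rnot_lt_le. intros h. set (e := (asym_radius s z - r) / 2).
    destruct (Hlim e ltac:(unfold e; lra)) as [N1 HN1].
    destruct (INR_S_inv_lt e ltac:(unfold e; lra)) as [N2 HN2].
    set (k := max N1 N2).
    pose proof (HN1 k ltac:(unfold k; lia)). pose proof (HN2 k ltac:(unfold k; lia)).
    pose proof (Hzs k). pose proof (asym_radius_le_dist s z (zs k)).
    unfold e in *. lra. }
  exists z. intros w Hne. apply Rnot_le_lt. intros Hle. apply Hne.
  apply (asym_center_unique s r); auto; lra.
Qed.

Definition approx_orbit_pair (xs : nat -> X) (L r : R) (v z : X) : Prop :=
  forall e, e > 0 -> exists k, L - e <= d (xs (S k)) v /\
    d (xs k) v <= d (xs (S k)) v + e /\ d (xs (S k)) z <= r + e.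

Lemma approx_orbit_pair_asym_radius xs v z :
  approx_orbit_pair xs (asym_radius xs v) (asym_radius xs z) v z.
Proof.
  intros e He.
  destruct (asym_radius_spec xs v) as [[Av Bv] _]. destruct (asym_radius_spec xs z) as [[Az _] _].
  destruct (Av (e / 2) ltac:(lra)) as [N1 HN1]. destruct (Az e He) as [N2 HN2].
  destruct (Bv (e / 2) (S (max N1 N2)) ltac:(lra)) as [n [Hn1 Hn2]].
  destruct n as [|k]; [lia|]. exists k. split; [lra|split].
  - specialize (HN1 k ltac:(lia)). lra.
  - apply HN2. lia.
Qed.

Lemma approx_orbit_pair_subseq xs phi v z :
  (forall i, (phi i < phi (S i))%nat) ->
  (forall eta, eta > 0 -> exists N, forall n, (N <= n)%nat -> d (xs n) (xs (S n)) <= eta) ->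
  approx_orbit_pair xs (asym_radius (fun i => xs (phi i)) v)
    (asym_radius (fun i => xs (phi i)) z) v z.
Proof.
  intros Hphi Hst e He. pose proof (strict_mono_ge_id phi Hphi) as Hge.
  destruct (asym_radius_spec (fun i => xs (phi i)) v) as [[_ Bv] _].
  destruct (asym_radius_spec (fun i => xs (phi i)) z) as [[Az _] _].
  destruct (Az e He) as [N2 HN2]. destruct (Hst e He) as [N3 HN3].
  destruct (Bv e (S (max N2 N3)) He) as [i [Hi1 Hi2]].
  specialize (Hge i). specialize (HN2 i ltac:(lia)). cbv beta in Hi2, HN2.
  destruct (phi i) as [|k]; [lia|].
  exists k. split; [lra|split]; [|exact HN2].
  specialize (HN3 k ltac:(lia)). pose proof (dist_triangle (xs k) (xs (S k)) v). lra.
Qed.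

Section Resolvent.

Variables (f : X -> ER) (Rf : X -> X).
Hypotheses (Hproper : proper f) (Hconvex : convex d f) (Hresolvent : is_resolvent d f Rf).

Lemma resolvent_finite x : exists fu, f (Rf x) = Fin fu.
Proof.
  destruct Hproper as [x0 [r Hr]]. pose proof (Hresolvent x x0) as K. cbv beta in K.
  rewrite Hr in K. destruct (f (Rf x)) as [fu|]; [eauto|contradiction].
Qed.

Lemma resolvent_min x y fu fy :
  f (Rf x) = Fin fu -> f y = Fin fy ->
  fu + (/ cos (d (Rf x) x) - cos (d (Rf x) x)) <= fy + (/ cos (d y x) - cos (d y x)).
Proof.
  intros Hu Hy. pose proof (Hresolvent x y) as K. cbv beta in K.
  rewrite Hu, Hy, !tan_mul_sin in K by apply cos_dist_gt0. exact K.
Qed.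

(* Convexity of [f] along [[Rf x, y]] against the minimality of [Rf x]. *)
Lemma resolvent_chord_bound x y c fu fy t :
  geodesic d (Rf x) y c -> f (Rf x) = Fin fu -> f y = Fin fy -> 0 < t < d (Rf x) y ->
  let k := cos_profile (cos (d (Rf x) x)) (cos (d y x)) (d (Rf x) y) in
  (fu - fy) / d (Rf x) y * t <= (/ k t - k t) - (/ k 0 - k 0).
Proof.
  intros Hc Hu Hy Ht k. pose proof PI_RGT_0.
  set (l := d (Rf x) y) in *.
  assert (Hl2 : l < PI / 2) by apply dist_lt_PI2.
  assert (sl : 0 < sin l) by (apply sin_gt_0; lra).
  assert (Hk0 : k 0 = cos (d (Rf x) x))
    by (unfold k, cos_profile; rewrite Rminus_0_r, sin_0; field; lra).
  assert (Ha : 0 < 1 - t / l < 1).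
  { assert (0 < t / l < 1); [|lra]. split; [apply Rdiv_lt_0_compat; lra|].
    apply (Rmult_lt_reg_r l); [lra|]. unfold Rdiv. rewrite Rmult_assoc, Rinv_l; lra. }
  pose proof (Hconvex (Rf x) y (1 - t / l) c Ha Hc) as Hcv.
  rewrite Hu, Hy in Hcv. fold l in Hcv.
  replace ((1 - (1 - t / l)) * l) with t in Hcv by (field; lra).
  destruct (f (c t)) as [fw|] eqn:Efw; [|contradiction]. simpl in Hcv.
  pose proof (resolvent_min x (c t) fu fw Hu Efw) as Hmin.
  pose proof (cat1_cos_geodesic (Rf x) y x c t Hc ltac:(fold l; lra) ltac:(fold l; lra)) as Hcat1.
  assert (Hkt : 0 < k t).
  { assert (0 < sin t) by (apply sin_gt_0; lra).
    assert (0 <= sin (l - t)) by (apply sin_ge_0; lra).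
    pose proof (cos_dist_gt0 (Rf x) x). pose proof (cos_dist_gt0 y x).
    unfold k, cos_profile. apply Rdiv_lt_0_compat; nra. }
  assert (Hkc : k t <= cos (d (c t) x)).
  { unfold k, cos_profile. apply (Rmult_le_reg_r (sin l)); auto. unfold Rdiv.
    rewrite Rmult_assoc, Rinv_l by lra. fold l in Hcat1. lra. }
  assert (/ cos (d (c t) x) <= / k t) by (apply Rinv_le_contravar; auto).
  rewrite Hk0. replace ((fu - fy) / l * t) with (t / l * fu - t / l * fy) by (field; lra).
  lra.
Qed.

Lemma resolvent_slope_le x y fu fy :
  f (Rf x) = Fin fu -> f y = Fin fy -> 0 < d (Rf x) y ->
  (fu - fy) / d (Rf x) y <=
  (1 + / cos (d (Rf x) x) ^ 2)
  * (cos (d (Rf x) x) * cos (d (Rf x) y) - cos (d y x)) / sin (d (Rf x) y).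
Proof.
  intros Hu Hy Hl.
  destruct (geodesic_exists (Rf x) y) as [c Hc].
  pose proof (cos_dist_gt0 (Rf x) x) as HC.
  pose proof (sin_dist_gt0 _ _ Hl) as sl.
  pose proof (inv_sub_cos_profile_derive _ (cos (d y x)) _ HC sl) as HD.
  apply is_derive_Reals in HD.
  eapply Rle_trans.
  - apply (derivable_pt_lim_ge_slope _ _ _ _ HD Hl).
    intros t Ht. exact (resolvent_chord_bound x y c fu fy t Hc Hu Hy Ht).
  - right. field. lra.
Qed.

Lemma resolvent_pair_ineq x y :
  (1 + / cos (d (Rf x) x) ^ 2)
  * (cos (d (Rf y) x) - cos (d (Rf x) x) * cos (d (Rf x) (Rf y)))
  <= (1 + / cos (d (Rf y) y) ^ 2)
     * (cos (d (Rf y) y) * cos (d (Rf x) (Rf y)) - cos (d (Rf x) y)).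
Proof.
  destruct (resolvent_finite x) as [fu Hu]. destruct (resolvent_finite y) as [fv Hv].
  destruct (dist_pos_or_eq (Rf x) (Rf y)) as [E|Hl].
  - rewrite E, dist_xx, cos_0. right. ring.
  - pose proof (resolvent_slope_le x (Rf y) fu fv Hu Hv Hl) as R1.
    pose proof (resolvent_slope_le y (Rf x) fv fu Hv Hu ltac:(rewrite dist_sym; lra)) as R2.
    rewrite (dist_sym (Rf y) (Rf x)) in R2.
    pose proof (sin_dist_gt0 _ _ Hl) as sl.
    set (s := sin (d (Rf x) (Rf y))) in *. set (l := d (Rf x) (Rf y)) in *.
    assert (Hsum : 0 <= (fu - fv) / l + (fv - fu) / l) by (right; field; lra).
    unfold Rdiv in R1, R2.
    assert (s * / s = 1) by (field; lra). assert (0 < / s) by (apply Rinv_0_lt_compat; lra).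
    nra.
Qed.

Lemma fixed_point_is_argmin z : Rf z = z -> is_argmin f z.
Proof.
  intros Hz y. destruct (resolvent_finite z) as [fz Hfz]. rewrite Hz in Hfz.
  rewrite Hfz. destruct (f y) as [fy|] eqn:Efy; [|exact I]. simpl.
  destruct (dist_pos_or_eq z y) as [<-|Hl].
  - rewrite Hfz in Efy. injection Efy; lra.
  - rewrite <- Hz in Hfz, Hl.
    pose proof (resolvent_slope_le z y fz fy Hfz Efy Hl) as K.
    rewrite Hz, dist_xx, cos_0, (dist_sym y z) in K. rewrite Hz in Hl.
    replace ((1 + / 1 ^ 2) * (1 * cos (d z y) - cos (d z y)) / sin (d z y)) with 0 in K
      by (unfold Rdiv; ring).
    apply Rnot_lt_le. intros h.
    assert (0 < (fz - fy) / d z y) by (apply Rdiv_lt_0_compat; lra). lra.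
Qed.

Lemma argmin_is_fixed_point p : is_argmin f p -> Rf p = p.
Proof.
  intros Hm. destruct (argmin_finite f p Hproper Hm) as [fp Hfp].
  destruct (resolvent_finite p) as [fu Hfu].
  pose proof (resolvent_min p p fu fp Hfu Hfp) as K.
  rewrite dist_xx, cos_0 in K.
  pose proof (Hm (Rf p)) as K2. rewrite Hfu, Hfp in K2. simpl in K2.
  pose proof (cos_dist_gt0 (Rf p) p). pose proof (COS_bound (d (Rf p) p)).
  set (c := cos (d (Rf p) p)) in *.
  assert (Hc1 : 1 <= c).
  { apply Rnot_lt_le. intros h.
    assert (1 < / c) by (rewrite <- Rinv_1; apply Rinv_lt_contravar; lra). lra. }
  apply dist_eq0. pose proof (dist_ge0 (Rf p) p).
  assert (d (Rf p) p <= 0); [|lra].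
  apply cos_le_inv; [pose proof PI_RGT_0; lra|apply dist_range|]. rewrite cos_0. exact Hc1.
Qed.

(* The CAT(1) form of Fejer monotonicity of the resolvent towards minimizers. *)
Lemma resolvent_cos_fejer p x :
  is_argmin f p -> cos (d x p) <= cos (d (Rf x) x) * cos (d (Rf x) p).
Proof.
  intros Hm. destruct (argmin_finite f p Hproper Hm) as [fp Hfp].
  destruct (resolvent_finite x) as [fu Hfu].
  destruct (dist_pos_or_eq (Rf x) p) as [<-|Hl].
  - rewrite dist_xx, cos_0, dist_sym. lra.
  - pose proof (resolvent_slope_le x p fu fp Hfu Hfp Hl) as K.
    pose proof (Hm (Rf x)) as K2. rewrite Hfu, Hfp in K2. simpl in K2.
    assert (0 <= (fu - fp) / d (Rf x) p) by (apply Rdiv_le_0_compat; lra).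
    pose proof (sin_dist_gt0 _ _ Hl) as sl.
    pose proof (cos_dist_gt0 (Rf x) x).
    assert (0 < 1 + / cos (d (Rf x) x) ^ 2).
    { assert (0 < / cos (d (Rf x) x) ^ 2) by (apply Rinv_0_lt_compat; nra). lra. }
    rewrite (dist_sym x p).
    set (A := cos (d (Rf x) x) * cos (d (Rf x) p) - cos (d p x)) in *.
    apply Rnot_lt_le. intros h.
    assert (HA : A < 0) by (unfold A; lra).
    assert ((1 + / cos (d (Rf x) x) ^ 2) * A / sin (d (Rf x) p) < 0).
    { apply Rdiv_neg_pos; auto. nra. }
    lra.
Qed.

Lemma resolvent_dist_argmin_le p y : is_argmin f p -> d (Rf y) p <= d y p.
Proof.
  intros Hp. pose proof (resolvent_cos_fejer p y Hp).
  pose proof (cos_dist_gt0 (Rf y) y). pose proof (COS_bound (d (Rf y) y)).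
  pose proof (cos_dist_gt0 (Rf y) p).
  apply cos_dist_le_inv. nra.
Qed.

Lemma resolvent_center_step a z L r e c0 :
  0 < c0 -> c0 <= cos (d (Rf a) a) -> 0 < e <= 1 -> 0 <= r <= PI / 2 -> 0 <= L ->
  L - e <= d (Rf a) (Rf z) -> d a (Rf z) <= d (Rf a) (Rf z) + e -> d (Rf a) z <= r + e ->
  cos r <= cos L + (1 + / c0 ^ 2 + 2) * e.
Proof.
  intros Hc0 HC He Hr HL H1 H2 H3. pose proof PI2_3_2.
  pose proof (resolvent_pair_ineq a z) as Hpair.
  set (C := cos (d (Rf a) a)) in *. set (D := cos (d (Rf z) z)) in *.
  set (P := cos (d (Rf a) (Rf z))) in *.
  assert (HC1 : C <= 1) by apply COS_bound.
  assert (HD : 0 < D <= 1) by (split; [apply cos_dist_gt0|apply COS_bound]).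
  assert (HP : 0 < P <= 1) by (split; [apply cos_dist_gt0|apply COS_bound]).
  assert (HPa : P - e <= cos (d (Rf z) a)).
  { rewrite dist_sym. apply cos_ge_of_le_add; try lra; try apply dist_ge0.
    pose proof (dist_lt_PI2 (Rf a) (Rf z)). lra. }
  assert (HinvC : / C ^ 2 <= / c0 ^ 2) by (apply Rinv_le_contravar; [nra|apply pow_incr; lra]).
  assert (HinvC0 : 0 < / C ^ 2) by (apply Rinv_0_lt_compat; nra).
  assert (Hleft : - (1 + / c0 ^ 2) * e <= (1 + / C ^ 2) * (cos (d (Rf z) a) - C * P)).
  { assert (0 <= (1 - C) * P) by nra.
    assert ((1 + / C ^ 2) * (P - e - C * P) <= (1 + / C ^ 2) * (cos (d (Rf z) a) - C * P))
      by nra.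
    nra. }
  assert (Hz : cos r - e <= cos (d (Rf a) z))
    by (apply cos_ge_of_le_add; try lra; apply dist_ge0).
  assert (HM : 1 <= 1 + / D ^ 2) by (assert (0 < / D ^ 2) by (apply Rinv_0_lt_compat; nra); lra).
  assert (Hright : - (1 + / c0 ^ 2) * e <= D * P - cos (d (Rf a) z)).
  { destruct (Rle_lt_dec 0 (D * P - cos (d (Rf a) z))); nra. }
  assert (HPL : P <= cos L + e)
    by (apply cos_le_of_ge_sub; try lra; apply dist_range).
  nra.
Qed.

Lemma asym_center_is_fixed (xs s : nat -> X) c0 z :
  (forall n, xs (S n) = Rf (xs n)) -> 0 < c0 -> (forall n, c0 <= cos (d (xs (S n)) (xs n))) ->
  (forall w, w <> z -> asym_radius s z < asym_radius s w) ->
  approx_orbit_pair xs (asym_radius s (Rf z)) (asym_radius s z) (Rf z) z ->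
  Rf z = z.
Proof.
  intros Hx Hc0 Hcs Hcent Hpair.
  assert (Hle : asym_radius s (Rf z) <= asym_radius s z).
  { destruct (asym_radius_spec s (Rf z)) as [_ HL]. destruct (asym_radius_spec s z) as [_ Hr].
    pose proof PI_RGT_0.
    apply (le_of_cos_le_approx _ _ (1 + / c0 ^ 2 + 2)); try lra.
    { assert (0 < / c0 ^ 2) by (apply Rinv_0_lt_compat; nra). lra. }
    intros e He. destruct (Hpair e ltac:(lra)) as [k [K1 [K2 K3]]].
    rewrite Hx in K1, K2, K3.
    apply (resolvent_center_step (xs k) z); auto; try lra.
    rewrite <- Hx. apply Hcs. }
  apply NNPP. intros hne. specialize (Hcent _ hne). lra.
Qed.

Lemma orbit_steps_vanish (xs : nat -> X) p :
  (forall n, xs (S n) = Rf (xs n)) -> is_argmin f p ->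
  forall eta, eta > 0 -> exists N, forall n, (N <= n)%nat -> d (xs n) (xs (S n)) <= eta.
Proof.
  intros Hx Hp eta Heta. pose proof PI2_3_2.
  destruct (Rlt_le_dec (PI / 2) eta) as [hb|hb].
  { exists 0%nat. intros n _. pose proof (dist_lt_PI2 (xs n) (xs (S n))). lra. }
  assert (Hm : forall n, d (xs (S n)) p <= d (xs n) p).
  { intros n. rewrite Hx. apply resolvent_dist_argmin_le; auto. }
  set (lam := asym_radius xs p).
  destruct (asym_radius_spec xs p) as [HL [HL0 _]]. fold lam in HL, HL0.
  pose proof (is_limsup_nonincr_le _ _ Hm HL) as Hlow. cbv beta in Hlow.
  pose proof (Hlow 0%nat). pose proof (dist_lt_PI2 (xs 0%nat) p).
  assert (cl : 0 < cos lam) by (apply cos_gt_0; lra).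
  assert (ce : 0 <= cos eta < 1) by (split; [apply cos_ge_0|apply cos_lt_1]; lra).
  set (e := cos lam * (1 - cos eta)).
  assert (He : 0 < e) by (unfold e; apply Rmult_lt_0_compat; lra).
  assert (He1 : e <= 1) by (unfold e; pose proof (COS_bound lam); nra).
  destruct HL as [A _]. destruct (A e He) as [N HN]. exists N. intros n Hn.
  specialize (HN n Hn). cbv beta in HN.
  pose proof (resolvent_cos_fejer p (xs n) Hp) as Hfej. rewrite <- Hx in Hfej.
  set (C := cos (d (xs (S n)) (xs n))) in *.
  assert (c1 : cos (d (xs (S n)) p) <= cos lam).
  { apply cos_decr_le; [lra|apply Hlow|apply dist_range]. }
  assert (c2 : cos lam - e <= cos (d (xs n) p))
    by (apply cos_ge_of_le_add; try lra; apply dist_ge0).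
  assert (HC0 : 0 < C) by apply cos_dist_gt0.
  assert (HC : cos eta <= C) by (unfold e in c2; nra).
  rewrite dist_sym. apply cos_le_inv; [lra|apply dist_range|exact HC].
Qed.

Lemma argmin_exists_of_bounded_orbit x :
  spherically_bounded d (fun n => iter n Rf x) ->
  sup_lt (fun n => d (iter (S n) Rf x) (iter n Rf x)) (PI / 2) ->
  exists p, is_argmin f p.
Proof.
  intros [y [c' [N [Hc' Hb]]]] [c'' [Hc'' Hs]].
  set (xs := fun n => iter n Rf x).
  assert (Hy : asym_radius xs y < PI / 2).
  { apply Rle_lt_trans with c'; auto.
    exact (is_limsup_le_const _ _ _ N Hb (proj1 (asym_radius_spec xs y))). }
  destruct (asym_center_exists xs y Hy) as [z Hz].
  pose proof PI2_3_2.
  assert (h0 : 0 <= c'') by (specialize (Hs 0%nat); pose proof (dist_ge0 (iter 1 Rf x) (iter 0 Rf x)); lra).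
  assert (Hcs : forall n, cos c'' <= cos (d (xs (S n)) (xs n)))
    by (intros n; apply cos_decr_le; [apply dist_ge0|apply Hs|lra]).
  exists z. apply fixed_point_is_argmin.
  apply (asym_center_is_fixed xs xs (cos c'')); auto.
  - apply cos_gt_0; lra.
  - apply approx_orbit_pair_asym_radius.
Qed.

Lemma orbit_subseq_center_argmin x p phi :
  is_argmin f p -> (forall i, (phi i < phi (S i))%nat) ->
  exists z, is_argmin f z /\ forall w, w <> z ->
    asym_radius (fun i => iter (phi i) Rf x) z < asym_radius (fun i => iter (phi i) Rf x) w.
Proof.
  intros Hp Hphi.
  set (xs := fun n => iter n Rf x).
  assert (Hx : forall n, xs (S n) = Rf (xs n)) by reflexivity.
  assert (Hbd : forall n, d (xs n) p <= d (xs 0%nat) p).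
  { intros n. apply (nonincr_le (fun n => d (xs n) p)); [|lia].
    intros k. rewrite Hx. apply resolvent_dist_argmin_le, Hp. }
  pose proof PI2_3_2. pose proof (dist_range (xs 0%nat) p). pose proof (dist_lt_PI2 (xs 0%nat) p).
  set (c0 := cos (d (xs 0%nat) p)).
  assert (Hc0 : 0 < c0) by (apply cos_gt_0; lra).
  assert (Hcs : forall n, c0 <= cos (d (xs (S n)) (xs n))).
  { intros n. pose proof (resolvent_cos_fejer p (xs n) Hp) as Hfej. rewrite <- Hx in Hfej.
    assert (c0 <= cos (d (xs n) p)) by (apply cos_decr_le; [apply dist_ge0|apply Hbd|lra]).
    pose proof (cos_dist_gt0 (xs (S n)) (xs n)). pose proof (COS_bound (d (xs (S n)) p)).
    pose proof (cos_dist_gt0 (xs (S n)) p). nra. }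
  assert (Hy : asym_radius (fun i => xs (phi i)) p < PI / 2).
  { apply Rle_lt_trans with (d (xs 0%nat) p); auto.
    exact (is_limsup_le_const _ _ _ 0%nat (fun n _ => Hbd (phi n))
      (proj1 (asym_radius_spec (fun i => xs (phi i)) p))). }
  destruct (asym_center_exists _ p Hy) as [z Hz].
  exists z. split; auto. apply fixed_point_is_argmin.
  apply (asym_center_is_fixed xs (fun i => xs (phi i)) c0); auto.
  apply approx_orbit_pair_subseq; auto.
  exact (orbit_steps_vanish xs p Hx Hp).
Qed.

Lemma orbit_asym_radius_subseq x phi q :
  is_argmin f q -> (forall i, (phi i < phi (S i))%nat) ->
  asym_radius (fun i => iter (phi i) Rf x) q = asym_radius (fun n => iter n Rf x) q.
Proof.
  intros Hq Hphi.
  apply (is_limsup_unique (fun i => d (iter (phi i) Rf x) q)); [apply asym_radius_spec|].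
  apply (is_limsup_subseq_nonincr (fun n => d (iter n Rf x) q)); auto.
  - intros n. apply resolvent_dist_argmin_le, Hq.
  - apply asym_radius_spec.
Qed.

Lemma orbit_Delta_conv x p :
  is_argmin f p -> exists q, is_argmin f q /\ Delta_conv d (fun n => iter n Rf x) q.
Proof.
  intros Hp.
  destruct (orbit_subseq_center_argmin x p (fun i => i) Hp ltac:(intros; cbv beta; lia)) as [q [Hq Hcent]].
  exists q. split; auto. intros phi Hphi.
  destruct (orbit_subseq_center_argmin x p phi Hp Hphi) as [z [Hz Hzc]].
  assert (z = q) as ->.
  { apply NNPP. intros hne. pose proof (Hcent z hne) as A1.
    pose proof (Hzc q (not_eq_sym hne)) as A2.
    rewrite (orbit_asym_radius_subseq x phi z), (orbit_asym_radius_subseq x phi q) in A2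
      by auto.
    lra. }
  exists (asym_radius (fun i => iter (phi i) Rf x) q).
  split; [apply asym_radius_spec|]. intros w Lw hw HLw.
  rewrite <- (is_limsup_unique _ _ _ (proj1 (asym_radius_spec _ w)) HLw).
  apply Hzc; auto.
Qed.

Lemma bounded_orbit_of_argmin p :
  is_argmin f p ->
  spherically_bounded d (fun n => iter n Rf p) /\
  sup_lt (fun n => d (iter (S n) Rf p) (iter n Rf p)) (PI / 2).
Proof.
  intros Hp. pose proof PI_RGT_0.
  assert (Hit : forall n, iter n Rf p = p).
  { induction n as [|n IH]; [reflexivity|]. change (Rf (iter n Rf p) = p). rewrite IH.
    apply argmin_is_fixed_point, Hp. }
  split.
  - exists p, 0, 0%nat. split; [lra|]. intros n _. rewrite Hit, dist_xx. lra.
  - exists 0. split; [lra|]. intros n. rewrite !Hit, dist_xx. lra.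
Qed.

End Resolvent.

End AdmissibleCAT1.

(* Lower semicontinuity of [f] is what makes the resolvent exist. *)
Theorem corollary4p8 (X : Type) (d : X -> X -> R) (f : X -> ER) (Rf : X -> X) :
  CAT1_space d -> admissible d -> complete d ->
  proper f -> lsc d f -> convex d f ->
  is_resolvent d f Rf ->
  ((exists p, is_argmin f p) <->
     exists x, spherically_bounded d (fun n => iter n Rf x) /\
               sup_lt (fun n => d (iter (S n) Rf x) (iter n Rf x)) (PI / 2)) /\
  ((exists p, is_argmin f p) ->
     forall x, exists p, is_argmin f p /\ Delta_conv d (fun n => iter n Rf x) p).
Proof.
  intros [Hmet [Hgeo Hcat]] Hadm Hcomp Hp _ Hconv Hres.
  split; [split|].
  - intros [p Hmin]. exists p. eapply bounded_orbit_of_argmin; eauto.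
  - intros [x [Hsb Hsup]]. eapply argmin_exists_of_bounded_orbit; eauto.
  - intros [p Hmin] x. eapply orbit_Delta_conv; eauto.
Qed.
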